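(* Let $\frac{1}{2}\leq \alpha <1$ and let $G$ be a graph with $n$ vertices and $m$ edges. If $1\leq k\leq n-1$, then $$S_{k}(A_{\alpha}(G))\leq \frac{2\alpha km}{n}+\sqrt{\frac{k(n-k)}{n}\left(\alpha^2Z_1+2m(1-\alpha)^2-\frac{4\alpha^2m^2}{n}\right)},$$ where $Z_1$ is the first Zagreb index of $G$.
   Context: All graphs are simple and undirected. $A_{\alpha}(G)=\alpha D(G)+(1-\alpha)A(G)$, where $A(G)$ is the adjacency matrix and $D(G)$ the diagonal matrix of vertex degrees. For a real symmetric matrix $M$ with eigenvalues $\lambda_1(M)\geq\cdots\geq\lambda_n(M)$, $S_k(M)=\sum_{i=1}^k\lambda_i(M)$. The first Zagreb index $Z_1=Z_1(G)=\sum_{v\in V(G)} d_v^2$ is the sum of the squares of the vertex degrees. *)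

From HB Require Import structures.
From mathcomp Require Import all_boot all_order all_algebra.
Set Implicit Arguments. Unset Strict Implicit. Unset Printing Implicit Defensive.
Import Order.TTheory GRing.Theory Num.Theory.
Local Open Scope ring_scope.

Definition simple_graph (n : nat) (e : rel 'I_n) : Prop :=
  symmetric e /\ irreflexive e.

Definition deg (n : nat) (e : rel 'I_n) (v : 'I_n) : nat := #|[set w | e v w]|.

Definition nedges (n : nat) (e : rel 'I_n) : nat :=
  #|[set p : 'I_n * 'I_n | (p.1 < p.2)%N && e p.1 p.2]|.

Definition zagreb1 (n : nat) (e : rel 'I_n) : nat := (\sum_(v < n) (deg e v) ^ 2)%N.

Definition adjmx (R : nzRingType) (n : nat) (e : rel 'I_n) : 'M[R]_n :=
  \matrix_(i, j) (if e i j then 1 else 0).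

Definition degmx (R : nzRingType) (n : nat) (e : rel 'I_n) : 'M[R]_n :=
  diag_mx (\row_i ((deg e i)%:R)).

Definition Aalpha (R : comNzRingType) (n : nat) (e : rel 'I_n) (alpha : R) : 'M[R]_n :=
  alpha *: degmx R e + (1 - alpha) *: adjmx R e.

Definition eigenvalues_desc (R : realDomainType) (n : nat) (M : 'M[R]_n) (s : seq R) : Prop :=
  sorted (fun x y => y <= x) s /\ char_poly M = \prod_(x <- s) ('X - x%:P).

Definition Sk (R : realDomainType) (s : seq R) (k : nat) : R := \sum_(i < k) s`_i.

(* The eigenvalues of A_alpha(G) have sum tr A_alpha = 2 alpha m and sum of
   squares tr A_alpha^2 = alpha^2 Z_1 + 2 (1 - alpha)^2 m.  For any reals
   x_1, ..., x_N with sum T and sum of squares Q, splitting them into the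
   first k and the last N - k and applying Cauchy-Schwarz to each block gives
   (x_1 + ... + x_k - k T / N)^2 <= k (N - k) / N * (Q - T^2 / N),
   which is the bound with N = n. *)

From mathcomp Require Import all_boot all_order all_algebra.
From mathcomp Require Import ring zify.
Set Implicit Arguments. Unset Strict Implicit. Unset Printing Implicit Defensive.
Import Order.TTheory GRing.Theory Num.Theory.
Local Open Scope ring_scope.

Section SumBounds.
Variable R : realFieldType.

Lemma sqr_sum_le_mul_sum_sqr (f : nat -> R) a b :
  (\sum_(a <= i < b) f i) ^+ 2 <= (b - a)%:R * \sum_(a <= i < b) f i ^+ 2.
Proof.
have [ba | ab] := leqP b a; first by rewrite !big_geq // expr0n mulr0.
set S := \sum_(a <= i < b) f i; set Q := \sum_(a <= i < b) f i ^+ 2.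
set L : R := (b - a)%:R.
have L_gt0 : 0 < L by rewrite ltr0n subn_gt0.
have dev_sqr : \sum_(a <= i < b) (L * f i - S) ^+ 2 = L * (L * Q - S ^+ 2).
  transitivity (\sum_(a <= i < b) (L ^+ 2 * f i ^+ 2 - (2 * L * S) * f i + S ^+ 2)).
    by apply: eq_bigr => i _; ring.
  by rewrite big_split sumrB /= -!mulr_sumr sumr_const_nat -mulr_natr -/S -/Q; ring.
have : 0 <= \sum_(a <= i < b) (L * f i - S) ^+ 2 by apply: sumr_ge0 => i _; exact: sqr_ge0.
by rewrite dev_sqr pmulr_rge0 // subr_ge0.
Qed.

Lemma two_block_deviation_le (p q A B QA QB : R) :
  0 <= p -> 0 <= q -> 0 < p + q -> A ^+ 2 <= p * QA -> B ^+ 2 <= q * QB ->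
  (A - p / (p + q) * (A + B)) ^+ 2
    <= p * q / (p + q) * (QA + QB - (A + B) ^+ 2 / (p + q)).
Proof.
move=> p_ge0 q_ge0 pq_gt0 hA hB; rewrite -subr_ge0.
have -> : p * q / (p + q) * (QA + QB - (A + B) ^+ 2 / (p + q))
            - (A - p / (p + q) * (A + B)) ^+ 2
          = (q * (p * QA - A ^+ 2) + p * (q * QB - B ^+ 2)) / (p + q).
  by field; rewrite gt_eqF.
by rewrite divr_ge0 ?addr_ge0 ?mulr_ge0 ?subr_ge0 // ltW.
Qed.

End SumBounds.

Lemma sum_prefix_le (R : rcfType) (f : nat -> R) k N :
  (0 < N)%N -> (k <= N)%N ->
  \sum_(0 <= i < k) f i
    <= k%:R / N%:R * (\sum_(0 <= i < N) f i)
       + Num.sqrt (k%:R * (N - k)%:R / N%:R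
                   * (\sum_(0 <= i < N) f i ^+ 2 - (\sum_(0 <= i < N) f i) ^+ 2 / N%:R)).
Proof.
move=> N_gt0 kN.
have split_sum (g : nat -> R) : \sum_(0 <= i < N) g i
    = \sum_(0 <= i < k) g i + \sum_(k <= i < N) g i by rewrite -big_cat_nat.
have hA := sqr_sum_le_mul_sum_sqr f 0 k; rewrite subn0 in hA.
have hB := sqr_sum_le_mul_sum_sqr f k N.
have NE : (N%:R : R) = k%:R + (N - k)%:R by rewrite -natrD subnKC.
rewrite -lerBlDl !split_sum NE.
apply: le_trans (ler_norm _) _; rewrite -sqrtr_sqr ler_sqrt; last first.
  by apply: le_trans (sqr_ge0 _) _; apply: two_block_deviation_le; rewrite // -NE ltr0n.
by apply: two_block_deviation_le; rewrite // -NE ltr0n.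
Qed.

Lemma horner_char_poly (R : comNzRingType) n (A : 'M[R]_n) x :
  (char_poly A).[x] = \det (x%:M - A).
Proof.
rewrite -horner_evalE /char_poly -det_map_mx; congr (\det _).
apply/matrixP => i j; rewrite !mxE /=.
change (('X *+ (i == j) - (A i j)%:P).[x] = x *+ (i == j) - A i j).
by rewrite hornerD hornerN hornerMn hornerX hornerC.
Qed.

Lemma horner_natr_inj (R : numDomainType) (p q : {poly R}) :
  (forall i : nat, p.[i%:R] = q.[i%:R]) -> p = q.
Proof.
move=> pq; apply/eqP; rewrite -subr_eq0; apply/negPn/negP => nz.
pose rs : seq R := [seq i%:R | i <- iota 0 (size (p - q))].
suff : (size rs < size (p - q)%R)%N by rewrite size_map size_iota ltnn.
apply: max_poly_roots nz _ _.
  by apply/allP => _ /mapP[i _ ->]; rewrite /root hornerD hornerN pq subrr.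
by rewrite map_inj_uniq ?iota_uniq //; apply: mulrIn; rewrite oner_neq0.
Qed.

Section CharPolyRoots.
Variables (R : comNzRingType) (n : nat) (M : 'M[R]_n) (s : seq R).
Hypothesis char_polyE : char_poly M = \prod_(x <- s) ('X - x%:P).

Lemma size_char_poly_roots : size s = n.
Proof. by have := size_char_poly M; rewrite char_polyE size_prod_XsubC => -[]. Qed.

Lemma sum_char_poly_roots : \sum_(x <- s) x = \tr M.
Proof.
have [n0 | n_gt0] := posnP n.
  have /eqP : size s = 0%N by rewrite size_char_poly_roots.
  rewrite size_eq0 => /eqP->; rewrite big_nil /mxtrace big1 // => i _.
  by move: (ltn_ord i); rewrite {2}n0.
apply: oppr_inj; rewrite -char_poly_trace // char_polyE -size_char_poly_roots.
by rewrite coefPn_prod_XsubC // size_char_poly_roots -lt0n.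
Qed.

End CharPolyRoots.

(* Evaluate at x^2 for x = sqrt i, using x^2 - M^2 = (x - M)(x + M). *)
Lemma char_poly_mulmx_self (R : rcfType) n (M : 'M[R]_n) (s : seq R) :
  char_poly M = \prod_(x <- s) ('X - x%:P) ->
  char_poly (M *m M) = \prod_(x <- s) ('X - (x ^+ 2)%:P).
Proof.
move=> char_polyE; apply: horner_natr_inj => i; set x := Num.sqrt (i%:R : R).
have -> : (i%:R : R) = x ^+ 2 by rewrite sqr_sqrtr ?ler0n.
have sqr_factor : (x ^+ 2)%:M - M *m M = (x%:M - M) *m (x%:M + M).
  rewrite mulmxDr !mulmxBl !mul_scalar_mx mul_mx_scalar expr2 scalar_mxM.
  by rewrite -mul_scalar_mx mul_scalar_mx addrA subrK.
have plus_factor : \det (x%:M + M) = (-1) ^+ n * \det ((- x)%:M - M).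
  by rewrite -detZ scaleN1r opprB raddfN /= opprK addrC.
rewrite horner_char_poly sqr_factor det_mulmx plus_factor -!horner_char_poly.
rewrite char_polyE !horner_prod -(size_char_poly_roots char_polyE).
elim: (s) => [|y t IH]; first by rewrite !big_nil expr0 !mulr1.
by rewrite !big_cons !hornerXsubC /= exprS -IH; ring.
Qed.

Lemma sum_sqr_char_poly_roots (R : rcfType) n (M : 'M[R]_n) (s : seq R) :
  char_poly M = \prod_(x <- s) ('X - x%:P) -> \sum_(x <- s) x ^+ 2 = \tr (M *m M).
Proof.
move=> char_polyE; rewrite -(big_map (fun x => x ^+ 2) xpredT (fun x => x)).
by apply: sum_char_poly_roots; rewrite (char_poly_mulmx_self char_polyE) big_map.
Qed.

Section GraphTraces.
Variables (R : comNzRingType) (n : nat) (e : rel 'I_n) (alpha : R).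
Hypotheses (e_sym : symmetric e) (e_irr : irreflexive e).

Lemma natr_deg i : (deg e i)%:R = \sum_j (e i j)%:R :> R.
Proof.
rewrite /deg -sum1_card big_mkcond natr_sum; apply: eq_bigr => j _.
by rewrite inE; case: (e i j).
Qed.

Lemma sum_deg : \sum_i (deg e i)%:R = 2 * (nedges e)%:R :> R.
Proof.
have lt_pairs : (nedges e)%:R = \sum_(i : 'I_n) \sum_(j : 'I_n) ((i < j)%N && e i j)%:R :> R.
  rewrite /nedges -sum1_card big_mkcond natr_sum pair_bigA /=.
  by apply: eq_bigr => p _; rewrite inE; case: (_ && _).
have gt_pairs : (nedges e)%:R = \sum_(i : 'I_n) \sum_(j : 'I_n) ((j < i)%N && e i j)%:R :> R.
  rewrite lt_pairs exchange_big /=.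
  by apply: eq_bigr => i _; apply: eq_bigr => j _; rewrite e_sym.
rewrite mulr2n mulrDl mul1r {1}lt_pairs gt_pairs -big_split /=.
apply: eq_bigr => i _; rewrite natr_deg -big_split /=; apply: eq_bigr => j _.
case: (ltngtP i j) => [ij|ji|/val_inj ->]; rewrite ?andbF ?andbT ?addr0 ?add0r //.
by rewrite e_irr.
Qed.

Lemma Aalpha_entry i j : Aalpha e alpha i j =
  (if j == i then alpha * (deg e i)%:R else 0) + (1 - alpha) * (e i j)%:R.
Proof.
rewrite /Aalpha /degmx /adjmx !mxE [j == i]eq_sym.
by case: (i == j); case: (e i j); rewrite /= ?mulr1n ?mulr0n ?mulr1 ?mulr0.
Qed.

Lemma mxtrace_Aalpha : \tr (Aalpha e alpha) = alpha * (2 * (nedges e)%:R).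
Proof.
rewrite /mxtrace -sum_deg mulr_sumr; apply: eq_bigr => i _.
by rewrite Aalpha_entry eqxx e_irr mulr0 addr0.
Qed.

Lemma mxtrace_Aalpha_sqr : \tr (Aalpha e alpha *m Aalpha e alpha) =
  alpha ^+ 2 * (zagreb1 e)%:R + (1 - alpha) ^+ 2 * (2 * (nedges e)%:R).
Proof.
rewrite /mxtrace -sum_deg /zagreb1 natr_sum !mulr_sumr -big_split /=.
apply: eq_bigr => i _; rewrite mxE.
transitivity (\sum_j ((if j == i then alpha ^+ 2 * (deg e i)%:R ^+ 2 else 0)
                      + (1 - alpha) ^+ 2 * (e i j)%:R)).
  apply: eq_bigr => j _; rewrite !Aalpha_entry (e_sym j i) [i == j]eq_sym.
  case: eqP => [->|_]; first by rewrite e_irr /= mulr0 addr0; ring.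
  by case: (e i j); rewrite /= ?add0r ?mulr1 ?mulr0 ?expr2 ?mul0r.
by rewrite big_split /= -big_mkcond big_pred1_eq -mulr_sumr -natr_deg natrX.
Qed.

End GraphTraces.

Theorem theorem3p2 (R : rcfType) (n : nat) (e : rel 'I_n) (alpha : R) (k : nat)
  (s : seq R) :
  simple_graph e ->
  1 / 2 <= alpha -> alpha < 1 ->
  (1 <= k)%N -> (k <= n - 1)%N ->
  eigenvalues_desc (Aalpha e alpha) s ->
  let m : R := (nedges e)%:R in
  let Z1 : R := (zagreb1 e)%:R in
  Sk s k <= 2 * alpha * k%:R * m / n%:R
            + Num.sqrt (k%:R * (n - k)%:R / n%:R
                        * (alpha ^+ 2 * Z1 + 2 * m * (1 - alpha) ^+ 2
                           - 4 * alpha ^+ 2 * m ^+ 2 / n%:R)).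
Proof.
move=> [e_sym e_irr] _ _ k_ge1 k_le_n1 [_ char_polyE] /=.
set m : R := (nedges e)%:R; set Z1 : R := (zagreb1 e)%:R.
have n_gt0 : (0 < n)%N by lia.
have size_s := size_char_poly_roots char_polyE.
have sum_s : \sum_(0 <= i < n) s`_i = alpha * (2 * m).
  rewrite -(mxtrace_Aalpha alpha e_sym e_irr).
  by rewrite -(sum_char_poly_roots char_polyE) [RHS](big_nth 0) size_s.
have sum_sqr_s : \sum_(0 <= i < n) s`_i ^+ 2 = alpha ^+ 2 * Z1 + (1 - alpha) ^+ 2 * (2 * m).
  rewrite -(mxtrace_Aalpha_sqr alpha e_sym e_irr).
  by rewrite -(sum_sqr_char_poly_roots char_polyE) [RHS](big_nth 0) size_s.
have := sum_prefix_le (fun i => s`_i) n_gt0 (leq_trans k_le_n1 (leq_subr 1 n)).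
rewrite /Sk -(big_mkord xpredT (fun i => s`_i)) sum_s sum_sqr_s => /le_trans; apply.
by rewrite le_eqVlt; apply/predU1P; left; congr (_ + Num.sqrt (_ * _)); ring.
Qed.
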